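(* Let $\mathcal{H}$ be a hypothesis class and $k\ge0$, $m\ge1$ integers. (i) $\mathrm{ELdim}(\mathcal{H},0)\ge m$ if and only if there exist $x\in\mathcal{X}$ and $y\in\{-1,+1\}$ such that $x\in\mathrm{DIS}(\mathcal{H})$ and $\mathrm{ELdim}(\mathcal{H}[(x,y)],0)\ge m-1$. (ii) If $k\ge1$, then $\mathrm{ELdim}(\mathcal{H},k)\ge m$ if and only if there exist $x\in\mathcal{X}$ and $y\in\{-1,+1\}$ such that both $\mathrm{ELdim}(\mathcal{H}[(x,y)],k)\ge m-1$ and $\mathrm{ELdim}(\mathcal{H}[(x,-y)],k-1)\ge m-1$.
   Context: Hypotheses are maps $\mathcal{X}\to\{-1,+1\}$; $\mathcal{H}[(x,y)]=\{h\in\mathcal{H}:h(x)=y\}$; $x\in\mathrm{DIS}(\mathcal{H})$ means both $\mathcal{H}[(x,+1)]$ and $\mathcal{H}[(x,-1)]$ are nonempty. Extended mistake tree w.r.t. $\mathcal{H}$: a finite full binary tree (possibly a single leaf) in which each internal node $v$ is labeled by $x_v\in\mathcal{X}$ and has two solid downward edges, to its left child (label $-1$) and right child (label $+1$), plus one dashed downward edge to one of its two children; each leaf is labeled by some $h\in\mathcal{H}$ with $h(x_v)$ equal to the direction label at every internal node $v$ on the root-to-leaf path. A root-to-leaf path chooses at each internal node one downward edge; its length is its number of edges. The tree is $(k,m)$-difficult if every root-to-leaf path using at most $k$ solid edges has length at least $m$. $\mathrm{ELdim}(\mathcal{H},k)$ is the supremum of $m$ such that a $(k,m)$-difficult extended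 mistake tree w.r.t. $\mathcal{H}$ exists (for empty $\mathcal{H}$ no tree exists and $\mathrm{ELdim}<0$). *)

From mathcomp Require Import all_boot.
Set Implicit Arguments. Unset Strict Implicit. Unset Printing Implicit Defensive.

(* Labels {-1,+1} are encoded as bool: false = -1, true = +1; -y is negb y. *)
Definition hclass (X : Type) := (X -> bool) -> Prop.

Definition restrict X (H : hclass X) (x : X) (y : bool) : hclass X :=
  fun h => H h /\ h x = y.

Definition DIS X (H : hclass X) (x : X) : Prop :=
  (exists h, restrict H x true h) /\ (exists h, restrict H x false h).

(* Finite full binary trees: internal nodes carry x_v and the direction
   (false = left child / label -1, true = right child / label +1) of the
   dashed edge; leaves carry a hypothesis. *)
Inductive emtree (X : Type) : Type :=
| ELeaf (h : X -> bool)
| ENode (x : X) (dashed : bool) (l r : emtree X).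

Fixpoint is_emtree X (H : hclass X) (t : emtree X) : Prop :=
  match t with
  | ELeaf h => H h
  | ENode x _ l r => is_emtree (restrict H x false) l /\ is_emtree (restrict H x true) r
  end.

Inductive emt_path X : emtree X -> nat -> nat -> Prop :=
| path_leaf h : emt_path (ELeaf h) 0 0
| path_dashed x d l r s n :
    emt_path (if d then r else l) s n -> emt_path (ENode x d l r) s n.+1
| path_left x d l r s n :
    emt_path l s n -> emt_path (ENode x d l r) s.+1 n.+1
| path_right x d l r s n :
    emt_path r s n -> emt_path (ENode x d l r) s.+1 n.+1.

Definition difficult X (k m : nat) (t : emtree X) : Prop :=
  forall s n, emt_path t s n -> s <= k -> m <= n.

(* ELdim(H,k) >= m, for a natural number m: since (k,m)-difficulty is
   downward closed in m, the supremum of the admissible m is >= m iff a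
   (k,m)-difficult extended mistake tree w.r.t. H exists.  For m = 0 this
   says that some tree exists (i.e. ELdim >= 0, H nonempty). *)
Definition ELdim_ge X (H : hclass X) (k m : nat) : Prop :=
  exists t : emtree X, is_emtree H t /\ difficult k m t.

From mathcomp Require Import all_boot.
Set Implicit Arguments. Unset Strict Implicit.

(* The root of a (k, m+1)-difficult tree is a node: following the dashed edge
   costs no solid edge, so the dashed child must be (k, m)-difficult, while the
   other child is reached only through a solid edge, so it must be
   (k-1, m)-difficult and is unconstrained when k = 0.  Conversely, hanging such
   subtrees below a node labelled x gives a (k, m+1)-difficult tree; for k = 0 a
   single leaf from H[(x,-y)] suffices as the solid child, which exists exactly
   when x is in DIS(H). *)

(* A node whose dashed edge leads to [ty], the child labelled [y]; [tn] is the
   child labelled [~~ y]. *)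
Definition enode X (x : X) (y : bool) (ty tn : emtree X) : emtree X :=
  ENode x y (if y then tn else ty) (if y then ty else tn).

Lemma ENode_enode X (x : X) d l r :
  ENode x d l r = enode x d (if d then r else l) (if d then l else r).
Proof. by case: d. Qed.

Lemma is_emtree_enode X (H : hclass X) x y ty tn :
  is_emtree H (enode x y ty tn) <->
  is_emtree (restrict H x y) ty /\ is_emtree (restrict H x (~~ y)) tn.
Proof. by case: y => /=; tauto. Qed.

Lemma is_emtree_nonempty X (H : hclass X) t : is_emtree H t -> exists h, H h.
Proof.
elim: t H => [h|x d l IHl r _] H /=; first by exists h.
by case=> /IHl [h []]; exists h.
Qed.

Lemma DISP X (H : hclass X) x y :
  DIS H x <-> (exists h, restrict H x y h) /\ (exists h, restrict H x (~~ y) h).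
Proof. by case: y; rewrite /DIS; tauto. Qed.

Lemma difficult_leaf X k m (h : X -> bool) : ~ difficult k m.+1 (ELeaf h).
Proof. by move/(_ 0 0 (path_leaf h) (leq0n k)). Qed.

Lemma difficult_enode X k m (x : X) y ty tn :
  difficult k m.+1 (enode x y ty tn) <->
  difficult k m ty /\ forall s n, emt_path tn s n -> s < k -> m <= n.
Proof.
split=> [D | [Dy Dn] s n P sk].
- split=> s n P sk.
    by apply: (D s n.+1) => //; apply: path_dashed; case: {D} y P.
  by apply: (D s.+1 n.+1) => //; case: {D} y P => P; [apply: path_left | apply: path_right].
- have solid_y s' n' : emt_path ty s' n' -> s'.+1 <= k -> m <= n'.
    by move=> P' sk'; apply: (Dy _ _ P'); apply: ltnW.
  case: y P => P; inversion P; subst; rewrite ltnS;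
    solve [apply: Dy; eassumption | apply: Dn; eassumption | apply: solid_y; eassumption].
Qed.

Lemma difficult0_enode X m (x : X) y ty tn :
  difficult 0 m.+1 (enode x y ty tn) <-> difficult 0 m ty.
Proof. by split=> [/difficult_enode[] | Dy]; last apply/difficult_enode. Qed.

Lemma difficultS_enode X k m (x : X) y ty tn :
  difficult k.+1 m.+1 (enode x y ty tn) <-> difficult k.+1 m ty /\ difficult k m tn.
Proof. exact: difficult_enode. Qed.

Lemma ELdim_ge_enode X (H : hclass X) k m :
  ELdim_ge H k m.+1 <->
  exists x y ty tn, is_emtree H (enode x y ty tn) /\ difficult k m.+1 (enode x y ty tn).
Proof.
split=> [[[h|x d l r] [E D]] | [x [y [ty [tn ED]]]]]; last by exists (enode x y ty tn).
  by case: (difficult_leaf D).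
by move: E D; rewrite ENode_enode => E D; do 4!eexists; exact: (conj E D).
Qed.

Lemma ELdim_ge0S X (H : hclass X) m :
  ELdim_ge H 0 m.+1 <->
  exists x y, DIS H x /\ ELdim_ge (restrict H x y) 0 m.
Proof.
split.
- move=> /ELdim_ge_enode [x [y [ty [tn [/is_emtree_enode [Ey En] /difficult0_enode Dy]]]]].
  exists x, y; split; last by exists ty.
  by apply/(DISP _ _ y); split; apply: is_emtree_nonempty; [exact: Ey | exact: En].
- move=> [x [y [/(DISP _ _ y) [_ [h Hh]] [ty [Ey Dy]]]]].
  apply/ELdim_ge_enode; exists x, y, ty, (ELeaf h).
  by split; [apply/is_emtree_enode | apply/difficult0_enode].
Qed.

Lemma ELdim_geSS X (H : hclass X) k m :
  ELdim_ge H k.+1 m.+1 <->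
  exists x y, ELdim_ge (restrict H x y) k.+1 m /\ ELdim_ge (restrict H x (~~ y)) k m.
Proof.
split.
- move=> /ELdim_ge_enode [x [y [ty [tn [/is_emtree_enode [Ey En]]]]]].
  by move=> /difficultS_enode [Dy Dn]; exists x, y; split; [exists ty | exists tn].
- move=> [x [y [[ty [Ey Dy]] [tn [En Dn]]]]].
  apply/ELdim_ge_enode; exists x, y, ty, tn.
  by split; [apply/is_emtree_enode | apply/difficultS_enode].
Qed.

Theorem mainTheorem20 (X : Type) (H : hclass X) (k m : nat) (hm : 1 <= m) :
  (ELdim_ge H 0 m <->
     exists (x : X) (y : bool), DIS H x /\ ELdim_ge (restrict H x y) 0 (m - 1))
  /\
  (1 <= k ->
   (ELdim_ge H k m <->
     exists (x : X) (y : bool),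
       ELdim_ge (restrict H x y) k (m - 1) /\
       ELdim_ge (restrict H x (~~ y)) (k - 1) (m - 1))).
Proof.
case: m hm => // m _; rewrite subn1 /=; split; first exact: ELdim_ge0S.
by case: k => // k _; rewrite subn1 /=; exact: ELdim_geSS.
Qed.
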